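(* Let $\mathcal{G}=(G,\lambda)$ be a simple temporal clique, $G=(V,E)$, let $\mathcal{T}^-=(V,E^-_T)$ be obtained by the forward construction and $\mathcal{T}^+=(V,E^+_T)$ by the backward construction, let $X^-$ be the set of emitters and $X^+$ the set of collectors, and let $E_H=\{\{u,v\}\in E: u\in X^-, v\in X^+\}$. Then the bidirectional fireworks cover $S=\{\{u,v\}:(u,v)\in E^-_T\cup E^+_T\}\cup E_H$ is a temporal spanner of $\mathcal{G}$.
   Context: A simple temporal clique is a pair $\mathcal{G}=(G,\lambda)$ where $G=(V,E)$ is the complete graph on a finite vertex set $V$ and $\lambda:E\to\mathbb{N}$ assigns to each edge a single integer label such that any two distinct edges sharing an endpoint have different labels; the label of an arc $(x,y)$ is $\lambda(\{x,y\})$. A journey from $x$ to $y$ is a sequence of vertices $x=u_0,\dots,u_k=y$ ($k\ge1$) with $\lambda(\{u_{i-1},u_i\})<\lambda(\{u_i,u_{i+1}\})$ for $1\le i<k$. A set $E'\subseteq E$ is a temporal spanner of $\mathcal{G}$ if for every ordered pair of distinct vertices $x,y$ there is a journey from $x$ to $y$ using only edges of $E'$. For a vertex $v$, $e^-(v)$ (resp. $e^+(v)$) is the edge incident to $v$ with smallest (resp. largest) label. Forward construction: let $E^-$ be the set of arcs $(u,v)$ with $\{u,v\}=e^-(v)$, except that if $e^-(u)=e^-(v)=\{u,v\}$ only one of $(u,v),(v,u)$ is included (arbitrarily). Initialize $E^-_T:=E^-$; for every vertex $v$ of out-degree at least $2$ in $(V,E^-)$, with out-arcs $(v,u_1),\dots,(v,u_\ell)$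 where $(v,u_\ell)$ has the largest label, for each $i<\ell$: if $u_i$ has out-degree $0$ in $(V,E^-)$ replace $(v,u_i)$ by $(u_i,v)$ in $E^-_T$, otherwise remove $(v,u_i)$ from $E^-_T$. Emitters are vertices of out-degree $0$ in $(V,E^-_T)$. Backward construction: let $E^+$ be the set of arcs $(v,u)$ with $\{u,v\}=e^+(v)$, except that if $e^+(u)=e^+(v)=\{u,v\}$ only one of $(u,v),(v,u)$ is included (arbitrarily). Initialize $E^+_T:=E^+$; for every vertex $v$ of in-degree at least $2$ in $(V,E^+)$, with in-arcs $(u_1,v),\dots,(u_\ell,v)$ where $(u_\ell,v)$ has the smallest label, for each $i<\ell$: if $u_i$ has in-degree $0$ in $(V,E^+)$ replace $(u_i,v)$ by $(v,u_i)$ in $E^+_T$, otherwise remove $(u_i,v)$ from $E^+_T$. Collectors are vertices of in-degree $0$ in $(V,E^+_T)$. *)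

From mathcomp Require Import all_boot.
Set Implicit Arguments. Unset Strict Implicit. Unset Printing Implicit Defensive.

Section TemporalClique.
Variable T : finType.
(* lam x y = label of the edge {x,y} of the complete graph on T (x != y). *)
Variable lam : T -> T -> nat.

Definition simple_temporal_clique : Prop :=
  (forall x y, lam x y = lam y x) /\
  (forall x y z, x != y -> x != z -> y != z -> lam x y != lam x z).

Definition is_emin (v u : T) : bool :=
  (u != v) && [forall w, (w != v) ==> (lam v u <= lam v w)].
Definition is_emax (v u : T) : bool :=
  (u != v) && [forall w, (w != v) ==> (lam v w <= lam v u)].

(* pick u v decides which of the two arcs is kept for a mutual pair *)
Variable pickm : T -> T -> bool.
Definition Em (u v : T) : bool := is_emin v u && (is_emin u v ==> pickm u v).
Definition outdegm (v : T) : nat := #|[set w | Em v w]|.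
Definition is_max_out (v u : T) : bool :=
  Em v u && [forall w, Em v w ==> (lam v w <= lam v u)].
Definition Em_removed : {set T * T} :=
  [set a | Em a.1 a.2 && (2 <= outdegm a.1) && ~~ is_max_out a.1 a.2].
Definition Em_added : {set T * T} :=
  [set a | ((a.2, a.1) \in Em_removed) && (outdegm a.1 == 0)].
Definition EmT : {set T * T} :=
  ([set a | Em a.1 a.2] :\: Em_removed) :|: Em_added.
Definition emitter (x : T) : bool := [forall w, (x, w) \notin EmT].

Variable pickp : T -> T -> bool.
Definition Ep (v u : T) : bool := is_emax v u && (is_emax u v ==> pickp v u).
Definition indegp (v : T) : nat := #|[set u | Ep u v]|.
Definition is_min_in (v u : T) : bool :=
  Ep u v && [forall w, Ep w v ==> (lam v u <= lam v w)].
Definition Ep_removed : {set T * T} :=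
  [set a | Ep a.1 a.2 && (2 <= indegp a.2) && ~~ is_min_in a.2 a.1].
Definition Ep_added : {set T * T} :=
  [set a | ((a.2, a.1) \in Ep_removed) && (indegp a.2 == 0)].
Definition EpT : {set T * T} :=
  ([set a | Ep a.1 a.2] :\: Ep_removed) :|: Ep_added.
Definition collector (x : T) : bool := [forall w, (w, x) \notin EpT].

Definition arcS (u v : T) : bool := ((u, v) \in EmT) || ((u, v) \in EpT).
Definition EH (u v : T) : bool :=
  (u != v) && ((emitter u && collector v) || (emitter v && collector u)).
Definition fireworks_cover (u v : T) : bool := [|| arcS u v, arcS v u | EH u v].

(* E' given as a predicate on (unordered) edges: E' u v <-> {u,v} \in E'. *)
Definition journey (E' : T -> T -> bool) (x y : T) : Prop :=
  exists s : seq T,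
    [/\ s != [::],
        path (fun a b => (a != b) && E' a b) x s,
        last x s = y &
        sorted ltn (pairmap lam x s)].

Definition temporal_spanner (E' : T -> T -> bool) : Prop :=
  forall x y : T, x != y -> journey E' x y.

End TemporalClique.

From mathcomp Require Import all_boot.
Set Implicit Arguments. Unset Strict Implicit. Unset Printing Implicit Defensive.

(* Following the arcs of T^- from x strictly increases the labels, so the walk
   ends at an emitter e, which it enters through e^-(e); dually, following the
   arcs of T^+ backwards from y ends at a collector c, left through e^+(c).
   Since the label of e^-(e) is minimal at e and that of e^+(c) maximal at c,
   the two walks glue into a journey from x to y, through the edge {e, c} of
   E_H when e != c. *)

Section Labels.
Variables (T : finType) (lam : T -> T -> nat).

Definition max_label : nat := \max_(a : T * T) lam a.1 a.2.

Lemma lam_le_max_label x y : lam x y <= max_label.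
Proof. exact: (@leq_bigmax _ (fun a : T * T => lam a.1 a.2) (x, y)). Qed.

Hypothesis lam_clique : simple_temporal_clique lam.

Lemma lamC x y : lam x y = lam y x.
Proof. exact: lam_clique.1. Qed.

Lemma lam_ltn x y z :
  x != y -> x != z -> y != z -> lam x y <= lam x z -> lam x y < lam x z.
Proof. by move=> xy xz yz; rewrite leq_eqVlt (negPf (lam_clique.2 _ _ _ xy xz yz)). Qed.

Lemma is_emin_lt e p q :
  is_emin lam e p -> q != e -> q != p -> lam e p < lam e q.
Proof.
move=> /andP[pe /forallP/(_ q)/implyP le_pq] qe qp.
by apply: (lam_ltn _ _ _ (le_pq qe)); rewrite eq_sym.
Qed.

Lemma is_emax_lt c q u :
  is_emax lam c q -> u != c -> u != q -> lam c u < lam c q.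
Proof.
move=> /andP[qc /forallP/(_ u)/implyP le_uq] uc uq.
by apply: (lam_ltn _ _ _ (le_uq uc)); rewrite // eq_sym.
Qed.

End Labels.

Section ForwardConstruction.
Variables (T : finType) (lam : T -> T -> nat) (pickm : T -> T -> bool).

Lemma Em_neq u v : Em lam pickm u v -> u != v.
Proof. by case/andP => /andP[]. Qed.

Lemma inEmT u v : ((u, v) \in EmT lam pickm) =
  (Em lam pickm u v && ((u, v) \notin Em_removed lam pickm))
  || (((v, u) \in Em_removed lam pickm) && (outdegm lam pickm u == 0)).
Proof. by rewrite !inE /= andbC. Qed.

Lemma inEm_removed u v : ((u, v) \in Em_removed lam pickm) =
  [&& Em lam pickm u v, 2 <= outdegm lam pickm u & ~~ is_max_out lam pickm u v].
Proof. by rewrite inE /= andbA. Qed.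

Lemma EmT_neq u v : (u, v) \in EmT lam pickm -> u != v.
Proof.
rewrite inEmT !inEm_removed => /orP[/andP[/Em_neq //] | /andP[/and3P[/Em_neq vu _ _] _]].
by rewrite eq_sym.
Qed.

Lemma is_max_out_EmT v w : is_max_out lam pickm v w -> (v, w) \in EmT lam pickm.
Proof. by move=> vw; rewrite inEmT inEm_removed vw (andP vw).1 andbF. Qed.

Lemma Em_has_max_out v u : Em lam pickm v u -> exists w, is_max_out lam pickm v w.
Proof.
move=> vu; have [w vw wmax] := arg_maxnP (lam v) vu.
by exists w; rewrite /is_max_out vw; apply/forallP => w'; apply/implyP/wmax.
Qed.

Lemma emitter_EmT_emin u e :
  (u, e) \in EmT lam pickm -> emitter lam pickm e -> is_emin lam e u.
Proof.
rewrite inEmT => /orP[/andP[/andP[] //] | /andP[]].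
rewrite inEm_removed => /and3P[eu _ _] _ /forallP em.
have [w /is_max_out_EmT ew] := Em_has_max_out eu.
by move: (em w); rewrite ew.
Qed.

Hypothesis lam_clique : simple_temporal_clique lam.
Hypothesis pickm_anti : forall u v, u != v -> pickm u v = ~~ pickm v u.

Lemma Em_asym u v : Em lam pickm u v -> ~~ Em lam pickm v u.
Proof.
move=> uv; have nuv := Em_neq uv; apply/negP => vu.
move: uv vu => /andP[evu puv] /andP[euv pvu].
by move: (implyP puv euv) (implyP pvu evu); rewrite pickm_anti // => /negP.
Qed.

(* Either (p, z) is kept, so that {p, z} = e^-(z), or it reverses a removed
   arc (z, p), and then (z, w) can only be the out-arc of z of largest label. *)
Lemma EmT_lam_lt p z w :
  (p, z) \in EmT lam pickm -> (z, w) \in EmT lam pickm -> lam p z < lam z w.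
Proof.
move=> + zw; rewrite lamC // inEmT => /orP[/andP[Epz kept] | /andP[removed_zp _]].
- have wp : w != p.
    apply: contraNneq kept => wp; move: zw; rewrite {}wp inEmT.
    by case/orP=> [/andP[/Em_asym/negPf] | /andP[]//]; rewrite Epz.
  by apply: (is_emin_lt lam_clique (andP Epz).1) wp; rewrite eq_sym (EmT_neq zw).
- move: removed_zp; rewrite inEm_removed => /and3P[Ezp deg_z not_max].
  move: zw; rewrite inEmT => /orP[/andP[Ezw kept] | /andP[_ /eqP deg0]]; last first.
    by rewrite deg0 in deg_z.
  have max_zw : is_max_out lam pickm z w.
    by move: kept; rewrite inEm_removed Ezw deg_z negbK.
  have pw : p != w by apply: contraNneq not_max => ->.
  apply: (lam_ltn lam_clique (Em_neq Ezp) (Em_neq Ezw) pw).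
  by move: max_zw => /andP[_ /forallP/(_ p)]; rewrite Ezp.
Qed.

End ForwardConstruction.

Section BackwardConstruction.
Variables (T : finType) (lam : T -> T -> nat) (pickp : T -> T -> bool).

(* The backward construction is the forward one for the reversed labelling
   [rev_lam], with every arc reversed. *)
Definition rev_lam (x y : T) : nat := max_label lam - lam x y.
Definition rev_pick (u v : T) : bool := pickp v u.

Lemma rev_lam_le x y z : (rev_lam x y <= rev_lam x z) = (lam x z <= lam x y).
Proof. exact/leq_sub2lE/lam_le_max_label. Qed.

Lemma is_emin_rev v u : is_emin rev_lam v u = is_emax lam v u.
Proof. by congr andb; apply: eq_forallb => w; rewrite rev_lam_le. Qed.

Lemma Em_rev u v : Em rev_lam rev_pick u v = Ep lam pickp v u.
Proof. by rewrite /Em /Ep !is_emin_rev. Qed.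

Lemma outdegm_rev v : outdegm rev_lam rev_pick v = indegp lam pickp v.
Proof. by apply: eq_card => u; rewrite !inE Em_rev. Qed.

Lemma is_max_out_rev v u : is_max_out rev_lam rev_pick v u = is_min_in lam pickp v u.
Proof.
by rewrite /is_max_out Em_rev; congr andb; apply: eq_forallb => w; rewrite Em_rev rev_lam_le.
Qed.

Lemma EpT_rev u v : ((u, v) \in EpT lam pickp) = ((v, u) \in EmT rev_lam rev_pick).
Proof. by rewrite !inE /= !Em_rev !outdegm_rev !is_max_out_rev. Qed.

Lemma collector_rev x : collector lam pickp x = emitter rev_lam rev_pick x.
Proof. by apply: eq_forallb => w; rewrite EpT_rev. Qed.

Lemma EpT_neq u v : (u, v) \in EpT lam pickp -> u != v.
Proof. by rewrite EpT_rev eq_sym => /EmT_neq. Qed.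

Lemma collector_EpT_emax c q :
  (c, q) \in EpT lam pickp -> collector lam pickp c -> is_emax lam c q.
Proof. by rewrite EpT_rev collector_rev -is_emin_rev; apply: emitter_EmT_emin. Qed.

Hypothesis lam_clique : simple_temporal_clique lam.
Hypothesis pickp_anti : forall u v, u != v -> pickp u v = ~~ pickp v u.

Lemma rev_lam_clique : simple_temporal_clique rev_lam.
Proof.
split=> [x y | x y z xy xz yz]; first by rewrite /rev_lam lamC.
by rewrite /rev_lam eqn_sub2lE ?lam_le_max_label ?lam_clique.2.
Qed.

Lemma rev_pick_anti u v : u != v -> rev_pick u v = ~~ rev_pick v u.
Proof. by rewrite eq_sym; apply: pickp_anti. Qed.

Lemma EpT_lam_lt u z w :
  (u, z) \in EpT lam pickp -> (z, w) \in EpT lam pickp -> lam u z < lam z w.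
Proof.
rewrite !EpT_rev => zu wz.
have := EmT_lam_lt rev_lam_clique rev_pick_anti wz zu.
by rewrite /rev_lam ltn_sub2lE ?lam_le_max_label // !(lamC lam_clique z).
Qed.

End BackwardConstruction.

Section Journeys.
Variables (T : finType) (lam : T -> T -> nat) (R : T -> T -> bool).

Inductive reach : T -> nat -> T -> Prop :=
| reach_refl x t : reach x t x
| reach_step x w y t :
    R x w -> x != w -> t <= lam x w -> reach w (lam x w).+1 y -> reach x t y.

Lemma reach_le s t x y : s <= t -> reach x t y -> reach x s y.
Proof.
move=> + xy; case: xy => [x' t' _ | x' w y' t' xw x'w tw wy st]; first exact: reach_refl.
exact: reach_step xw x'w (leq_trans st tw) wy.
Qed.

Lemma reach_seq x t y : reach x t y -> exists s,
  [/\ path (fun a b => (a != b) && R a b) x s, last x s = y,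
      sorted ltn (pairmap lam x s) & all (leq t) (pairmap lam x s)].
Proof.
elim=> [x' t' | x' w y' t' xw x'w tw _ [s [ps ls ss ts]]]; first by exists [::].
exists (w :: s); split=> //=; first by rewrite x'w xw.
- by rewrite (path_sortedE ltn_trans) ss andbT.
- by rewrite tw; apply: sub_all ts => l; apply: leq_trans (leqW tw).
Qed.

Lemma reach_journey x y : reach x 0 y -> x != y -> journey lam R x y.
Proof.
move=> /reach_seq[s [ps ls ss _]] xy; exists s; split=> //.
by apply: contraNneq xy => s0; rewrite -ls s0.
Qed.

(* [x] can be at [e] by time [s], expressed by what it permits: every journey
   leaving [e] no earlier than [s] extends a journey from [x]. *)
Definition arrives_by (x e : T) (s : nat) : Prop :=
  forall y, reach e s y -> reach x 0 y.

Lemma arrives_by_refl x s : arrives_by x x s.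
Proof. by move=> y; apply: reach_le. Qed.

Lemma arrives_by_le x e s t : s <= t -> arrives_by x e s -> arrives_by x e t.
Proof. by move=> st xe y ey; apply/xe/(reach_le st). Qed.

Lemma arrives_by_step x p e s : arrives_by x p s -> R p e -> p != e ->
  s <= lam p e -> arrives_by x e (lam p e).+1.
Proof. by move=> xp pe npe se y ey; apply/xp/(reach_step pe npe se ey). Qed.

(* Shape of the two ends of the journey: [x] enters the emitter [e] through
   [e^-(e) = {p, e}], so at the time of any other edge {e, z} it is already at
   [e], while at the time of {e, p} it is at [p], and at [e] just after;
   dually for the exit from the collector [c] through [e^+(c)] towards [y]. *)
Definition arrives_near (x e z : T) (s : nat) : Prop :=
  arrives_by x e s \/ arrives_by x z s /\ arrives_by x e s.+1.

Definition departs_near (c z y : T) (s : nat) : Prop :=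
  reach c s.+1 y \/ reach z s.+1 y /\ reach c s y.

Lemma reach_meet x v z y s :
  arrives_near x v z s -> departs_near v z y s -> reach x 0 y.
Proof.
case=> [xv | [xz xv]] [vy | [zy vy]].
- exact/xv/(reach_le (leqnSn s)).
- exact: xv.
- exact: xv.
- exact/xz/(reach_le (leqnSn s)).
Qed.

Lemma reach_bridge x e c y : R e c -> e != c ->
  arrives_near x e c (lam e c) -> departs_near c e y (lam e c) -> reach x 0 y.
Proof.
move=> ec nec [xe | [xc xe]] [cy | [ey cy]].
- exact/xe/(reach_step ec nec (leqnn _) cy).
- exact/xe/(reach_le (leqnSn _)).
- exact/xc/(reach_le (leqnSn _)).
- exact: xc.
Qed.

End Journeys.

Arguments arrives_by_refl {T lam R} x s.

Section Fireworks.
Variables (T : finType) (lam : T -> T -> nat) (pickm pickp : T -> T -> bool).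
Hypothesis lam_clique : simple_temporal_clique lam.
Hypothesis pickm_anti : forall u v, u != v -> pickm u v = ~~ pickm v u.
Hypothesis pickp_anti : forall u v, u != v -> pickp u v = ~~ pickp v u.

Local Notation S := (fireworks_cover lam pickm pickp).
Local Notation reach := (reach lam S).
Local Notation arrives_by := (arrives_by lam S).

Lemma EmT_cover u v : (u, v) \in EmT lam pickm -> S u v.
Proof. by rewrite /fireworks_cover /arcS => ->. Qed.

Lemma EpT_cover u v : (u, v) \in EpT lam pickp -> S u v.
Proof. by rewrite /fireworks_cover /arcS => ->; rewrite orbT. Qed.

Lemma emitter_collector_cover e c :
  emitter lam pickm e -> collector lam pickp c -> e != c -> S e c.
Proof. by move=> em co ec; rewrite /fireworks_cover /EH ec em co !orbT. Qed.

Lemma arrives_by_emitter x p z :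
  (p, z) \in EmT lam pickm -> arrives_by x p (lam p z) ->
  exists e p', [/\ emitter lam pickm e, (p', e) \in EmT lam pickm & arrives_by x p' (lam p' e)].
Proof.
have [n] := ubnP (max_label lam - lam p z); elim: n p z => // n IH p z.
rewrite ltnS => lt_n pz xp.
have [em_z | ] := boolP (emitter lam pickm z); first by exists z, p.
rewrite negb_forall => /existsP[w]; rewrite negbK => zw.
have lt_pz_zw := EmT_lam_lt lam_clique pickm_anti pz zw.
refine (IH z w _ zw _).
- apply: leq_trans _ lt_n; apply: (ltn_sub2l _ lt_pz_zw).
  exact: leq_trans lt_pz_zw (lam_le_max_label _ _ _).
- exact: arrives_by_le lt_pz_zw (arrives_by_step xp (EmT_cover pz) (EmT_neq pz) (leqnn _)).
Qed.

Lemma forward_entry x : exists2 e, emitter lam pickm e &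
  forall z, z != e -> arrives_near lam S x e z (lam e z).
Proof.
have [em_x | ] := boolP (emitter lam pickm x).
  by exists x => // z _; left; apply: arrives_by_refl.
rewrite negb_forall => /existsP[w]; rewrite negbK => xw.
have [e [p [em pe xp]]] := arrives_by_emitter xw (arrives_by_refl x _).
have emin := emitter_EmT_emin pe em.
have xe : arrives_by x e (lam e p).+1.
  by rewrite lamC //; apply: arrives_by_step xp (EmT_cover pe) (EmT_neq pe) (leqnn _).
exists e => // z ze; have [-> | zp] := eqVneq z p.
  by right; split=> //; rewrite lamC.
by left; apply: arrives_by_le xe; apply: is_emin_lt emin ze zp.
Qed.

Lemma reach_from_collector z w y :
  (z, w) \in EpT lam pickp -> reach w (lam z w).+1 y ->
  exists c q, [/\ collector lam pickp c, (c, q) \in EpT lam pickp & reach q (lam c q).+1 y].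
Proof.
have [n] := ubnP (lam z w); elim: n z w => // n IH z w.
rewrite ltnS => lt_n zw wy.
have [co_z | ] := boolP (collector lam pickp z); first by exists z, w.
rewrite negb_forall => /existsP[u]; rewrite negbK => uz.
have lt_uz_zw := EpT_lam_lt lam_clique pickp_anti uz zw.
refine (IH u z _ uz _); first exact: leq_trans lt_uz_zw lt_n.
exact: reach_step (EpT_cover zw) (EpT_neq zw) lt_uz_zw wy.
Qed.

Lemma backward_exit y : exists2 c, collector lam pickp c &
  forall z, z != c -> departs_near lam S c z y (lam c z).
Proof.
have [co_y | ] := boolP (collector lam pickp y).
  by exists y => // z _; left; apply: reach_refl.
rewrite negb_forall => /existsP[u]; rewrite negbK => uy.
have [c [q [co cq qy]]] := reach_from_collector uy (reach_refl _ _ y _).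
have emax := collector_EpT_emax cq co.
have cy : reach c (lam c q) y by apply: reach_step (EpT_cover cq) (EpT_neq cq) (leqnn _) qy.
exists c => // z zc; have [-> | zq] := eqVneq z q; first by right; split.
by left; apply: reach_step (EpT_cover cq) (EpT_neq cq) (is_emax_lt lam_clique emax zc zq) qy.
Qed.

End Fireworks.

Theorem theorem6 (T : finType) (lam : T -> T -> nat)
  (pickm pickp : T -> T -> bool) :
  simple_temporal_clique lam ->
  (forall u v : T, u != v -> pickm u v = ~~ pickm v u) ->
  (forall u v : T, u != v -> pickp u v = ~~ pickp v u) ->
  temporal_spanner lam (fireworks_cover lam pickm pickp).
Proof.
move=> clique pickm_anti pickp_anti x y xy; apply: (reach_journey _ xy).
have [e em Fx] := forward_entry pickp clique pickm_anti x.
have [c co By] := backward_exit pickm clique pickp_anti y.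
have [ce | ec] := eqVneq c e.
  have [z ze] : {z | z != e}.
    by case: (eqVneq x e) => [xe | ]; [exists y; rewrite -xe eq_sym | exists x].
  by apply: reach_meet (Fx z ze) _; rewrite -ce in ze *; apply: By.
have ne : e != c by rewrite eq_sym.
apply: (reach_bridge (emitter_collector_cover em co ne) ne (Fx c ec)).
by rewrite (lamC clique e c); apply: By.
Qed.
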